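(* Suppose Assumptions 1, 2 and 4 hold, let $R\ge1$, and run gradient descent with constant step size $\eta_t=1/\beta(R)$, where $\beta(R)=2L^2R^{2L-2}(\beta+G)$. Then there exists a time $t$ with $W(t)\notin B(R)$, i.e. $\max_{1\le k\le L}\|W_k(t)\|_F>R$.
   Context: Setting: data $(x_i,y_i)_{i=1}^n$ with $x_i\in\mathbb{R}^d$, $\|x_i\|\le 1$, $y_i\in\{-1,+1\}$; $z_i:=y_ix_i$; the data are linearly separable. A depth-$L$ linear network is $W=(W_L,\dots,W_1)$ with $W_k\in\mathbb{R}^{d_k\times d_{k-1}}$, $d_0=d$, $d_L=1$, $w_{\mathrm{prod}}:=(W_L\cdots W_1)^\top$, and $\mathcal{R}(W)=\frac1n\sum_{i=1}^n\ell(\langle w_{\mathrm{prod}},z_i\rangle)$. $B(R):=\{W:\max_k\|W_k\|_F\le R\}$. Gradient descent: $W(t+1)=W(t)-\eta_t\nabla\mathcal{R}(W(t))$, $t=0,1,2,\dots$. Assumption 1: $\ell$ is continuously differentiable, $\ell'<0$ everywhere, $\lim_{x\to-\infty}\ell(x)=\infty$, $\lim_{x\to\infty}\ell(x)=0$. Assumption 2: $\nabla\mathcal{R}(W(0))\ne0$ and $\mathcal{R}(W(0))\le\ell(0)$. Assumption 4: $\ell'$ is $\beta$-Lipschitz and $|\ell'|\le G$. *)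

From Stdlib Require Import Reals Lra.
Open Scope R_scope.

Fixpoint rsum (n : nat) (f : nat -> R) : R :=
  match n with O => 0 | S m => rsum m f + f m end.

(* A network W : k -> i -> j -> entry (i,j) of the matrix W_k,
   meaningful for 1 <= k <= L, i < d k, j < d (k-1). *)
Definition net := nat -> nat -> nat -> R.

Definition frob (d : nat -> nat) (W : net) (k : nat) : R :=
  sqrt (rsum (d k) (fun i => rsum (d (k - 1)%nat) (fun j => (W k i j) ^ 2))).

Fixpoint prodmx (d : nat -> nat) (W : net) (k : nat) : nat -> nat -> R :=
  match k with
  | O => fun i j => if Nat.eqb i j then 1 else 0
  | S m => fun i j => rsum (d m) (fun q => W (S m) i q * prodmx d W m q j)
  end.

(* w_prod = (W_L ... W_1)^T, a vector in R^{d 0} (d L = 1) *)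
Definition wprod (d : nat -> nat) (L : nat) (W : net) : nat -> R :=
  fun j => prodmx d W L 0%nat j.

Definition zdat (x : nat -> nat -> R) (y : nat -> R) : nat -> nat -> R :=
  fun i j => y i * x i j.

Definition risk (loss : R -> R) (n : nat) (d : nat -> nat) (L : nat)
  (x : nat -> nat -> R) (y : nat -> R) (W : net) : R :=
  / INR n * rsum n (fun i =>
     loss (rsum (d 0%nat) (fun j => wprod d L W j * zdat x y i j))).

Definition upd (W : net) (k i j : nat) (s : R) : net :=
  fun k' i' j' =>
    if (Nat.eqb k k' && Nat.eqb i i' && Nat.eqb j j')%bool then s else W k' i' j'.

Definition is_grad (loss : R -> R) (n : nat) (d : nat -> nat) (L : nat)
  (x : nat -> nat -> R) (y : nat -> R) (W g : net) : Prop :=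
  forall k i j, (1 <= k <= L)%nat -> (i < d k)%nat -> (j < d (k - 1))%nat ->
    derivable_pt_lim (fun s => risk loss n d L x y (upd W k i j s)) (W k i j) (g k i j).

From Stdlib Require Import Reals Lra Lia Psatz Classical FunctionalExtensionality.
Open Scope R_scope.

(* Suppose every iterate stays in B(R). On B(R) the network output is a smooth function of the
   weights, with constants controlled by R, so a step of size 1/beta(R) decreases the risk by at
   least (eta/2) |grad|^2. The first step decreases it strictly (the initial gradient is nonzero),
   so from then on the risk stays below loss(0) and some example keeps a margin >= delta > 0.
   Margins are bounded by R^L on the ball, so loss' stays below some M < 0 there; testing the
   gradient against the first-layer direction built from a separator u then gives
   |grad|^2 >= kappa > 0 uniformly in time. The risk would thus drop by eta kappa / 2 at every
   step, contradicting loss >= 0. *)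

(** * Finite sums and Euclidean norms *)

Lemma rsum_ext n f g : (forall i, (i < n)%nat -> f i = g i) -> rsum n f = rsum n g.
Proof.
  induction n as [|n IH]; intros H; simpl; [reflexivity|].
  rewrite IH, H; auto.
Qed.

Lemma rsum_0 n : rsum n (fun _ => 0) = 0.
Proof. induction n; simpl; lra. Qed.

Lemma rsum_add n f g : rsum n (fun i => f i + g i) = rsum n f + rsum n g.
Proof. induction n; simpl; lra. Qed.

Lemma rsum_sub n f g : rsum n (fun i => f i - g i) = rsum n f - rsum n g.
Proof. induction n; simpl; lra. Qed.

Lemma rsum_mul_l n c f : rsum n (fun i => c * f i) = c * rsum n f.
Proof. induction n; simpl; lra. Qed.

Lemma rsum_mul_r n c f : rsum n (fun i => f i * c) = rsum n f * c.
Proof. induction n; simpl; lra. Qed.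

Lemma rsum_const n c : rsum n (fun _ => c) = INR n * c.
Proof. induction n as [|n IH]; simpl rsum; [simpl; lra|rewrite IH, S_INR; lra]. Qed.

Lemma rsum_le n f g : (forall i, (i < n)%nat -> f i <= g i) -> rsum n f <= rsum n g.
Proof.
  induction n as [|n IH]; intros H; simpl; [lra|].
  assert (rsum n f <= rsum n g) by auto. specialize (H n ltac:(lia)). lra.
Qed.

Lemma rsum_nonneg n f : (forall i, (i < n)%nat -> 0 <= f i) -> 0 <= rsum n f.
Proof. intros H. rewrite <- (rsum_0 n). apply rsum_le. auto. Qed.

Lemma rsum_pos n f : (forall i, (i < n)%nat -> 0 <= f i) ->
  (exists i, (i < n)%nat /\ 0 < f i) -> 0 < rsum n f.
Proof.
  induction n as [|n IH]; intros H [i [Hi Hpos]]; [lia|]. simpl.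
  assert (Hn : 0 <= f n) by auto.
  destruct (Nat.eq_dec i n) as [->|Hne].
  - assert (0 <= rsum n f) by auto using rsum_nonneg. lra.
  - assert (0 < rsum n f) by (apply IH; eauto with arith; exists i; split; [lia|auto]). lra.
Qed.

Lemma rsum_lt n f c : (0 < n)%nat -> (forall i, (i < n)%nat -> c < f i) -> INR n * c < rsum n f.
Proof.
  intros Hn H. rewrite <- rsum_const.
  assert (0 < rsum n (fun i => f i - c)).
  { apply rsum_pos; [intros i Hi; specialize (H i Hi); lra|].
    exists 0%nat. specialize (H 0%nat Hn). split; [lia|lra]. }
  rewrite rsum_sub in H0. lra.
Qed.

Lemma rsum_nonpos_le_first n f : (0 < n)%nat -> (forall i, (i < n)%nat -> f i <= 0) ->
  rsum n f <= f 0%nat.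
Proof.
  intros Hn H. destruct n as [|n]; [lia|]. induction n as [|n IH]; simpl in *; [lra|].
  assert (f (S n) <= 0) by auto.
  assert (rsum n f + f n <= f 0%nat) by (apply IH; [lia|auto]). lra.
Qed.

Lemma rsum_mul_le_first n f w M : (0 < n)%nat -> M <= 0 ->
  (forall i, (i < n)%nat -> 0 <= w i) -> (forall i, (i < n)%nat -> f i <= M) ->
  rsum n (fun i => f i * w i) <= M * w 0%nat.
Proof.
  intros Hn HM Hw Hf.
  assert (Hterm : forall i, (i < n)%nat -> f i * w i <= M * w i)
    by (intros i Hi; apply Rmult_le_compat_r; auto).
  eapply Rle_trans; [apply rsum_nonpos_le_first; [exact Hn|]|apply Hterm, Hn].
  intros i Hi. specialize (Hterm i Hi). specialize (Hw i Hi). nra.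
Qed.

Lemma rsum_comm n m F :
  rsum n (fun i => rsum m (fun j => F i j)) = rsum m (fun j => rsum n (fun i => F i j)).
Proof. induction n as [|n IH]; simpl; [now rewrite rsum_0|now rewrite IH, <- rsum_add]. Qed.

Lemma rsum_single n f j : (j < n)%nat -> (forall i, (i < n)%nat -> i <> j -> f i = 0) ->
  rsum n f = f j.
Proof.
  induction n as [|n IH]; intros Hj H; [lia|]. simpl.
  destruct (Nat.eq_dec j n) as [->|Hne].
  - rewrite (rsum_ext _ _ (fun _ => 0)), rsum_0; [ring|]. intros; apply H; lia.
  - rewrite (H n) by (auto; lia). rewrite IH; [ring|lia|]. intros; apply H; lia.
Qed.

Lemma discriminant_le A B X : 0 <= B -> (forall l, 0 <= A - 2 * l * X + l ^ 2 * B) ->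
  X ^ 2 <= A * B.
Proof.
  intros HB Hq. destruct (Req_dec B 0) as [HB0|HB0].
  - destruct (Req_dec X 0) as [HX|HX]; [subst; lra|].
    specialize (Hq ((A + 1) / (2 * X))). rewrite HB0 in Hq.
    replace (A - 2 * ((A + 1) / (2 * X)) * X + ((A + 1) / (2 * X)) ^ 2 * 0) with (-1)
      in Hq by (field; auto). lra.
  - specialize (Hq (X / B)).
    replace (A - 2 * (X / B) * X + (X / B) ^ 2 * B) with ((A * B - X ^ 2) / B) in Hq
      by (field; auto).
    assert (0 <= (A * B - X ^ 2) / B * B) by (apply Rmult_le_pos; lra).
    replace ((A * B - X ^ 2) / B * B) with (A * B - X ^ 2) in H by (field; auto). lra.
Qed.

Lemma rsum_cauchy_schwarz n a b :
  rsum n (fun i => a i * b i) ^ 2 <= rsum n (fun i => a i ^ 2) * rsum n (fun i => b i ^ 2).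
Proof.
  apply discriminant_le; [apply rsum_nonneg; intros; apply pow2_ge_0|]. intros l.
  rewrite <- !rsum_mul_l, <- rsum_sub, <- rsum_add.
  apply rsum_nonneg. intros i _. replace (_ - _ + _) with ((a i - l * b i) ^ 2) by ring.
  apply pow2_ge_0.
Qed.

Definition vnorm (n : nat) (v : nat -> R) : R := sqrt (rsum n (fun i => v i ^ 2)).

Lemma vnorm_ge0 n v : 0 <= vnorm n v.
Proof. apply sqrt_pos. Qed.

Lemma vnorm_0 n : vnorm n (fun _ => 0) = 0.
Proof.
  unfold vnorm. rewrite (rsum_ext _ _ (fun _ => 0)), rsum_0 by (intros; ring). apply sqrt_0.
Qed.

Lemma vnorm_sq n v : vnorm n v ^ 2 = rsum n (fun i => v i ^ 2).
Proof.
  unfold vnorm. rewrite <- Rsqr_pow2. apply Rsqr_sqrt.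
  apply rsum_nonneg; intros; apply pow2_ge_0.
Qed.

Lemma vnorm_ext n v w : (forall i, (i < n)%nat -> v i = w i) -> vnorm n v = vnorm n w.
Proof. intros H. unfold vnorm. f_equal. apply rsum_ext. intros i Hi. now rewrite H. Qed.

Lemma vnorm_le_sq n v c : 0 <= c -> rsum n (fun i => v i ^ 2) <= c ^ 2 -> vnorm n v <= c.
Proof. intros Hc H. rewrite <- vnorm_sq in H. pose proof (vnorm_ge0 n v). nra. Qed.

Lemma vnorm_1 v : vnorm 1 v = Rabs (v 0%nat).
Proof. unfold vnorm. simpl. rewrite Rplus_0_l, Rmult_1_r. apply sqrt_Rsqr_abs. Qed.

Lemma dot_le_vnorm n a b : rsum n (fun i => a i * b i) <= vnorm n a * vnorm n b.
Proof.
  pose proof (rsum_cauchy_schwarz n a b) as H.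
  rewrite <- !vnorm_sq, <- Rpow_mult_distr in H.
  assert (0 <= vnorm n a * vnorm n b) by (apply Rmult_le_pos; apply vnorm_ge0). nra.
Qed.

Lemma vnorm_add_le n v w : vnorm n (fun i => v i + w i) <= vnorm n v + vnorm n w.
Proof.
  pose proof (vnorm_ge0 n v). pose proof (vnorm_ge0 n w). pose proof (dot_le_vnorm n v w).
  apply vnorm_le_sq; [lra|].
  replace (rsum n (fun i => (v i + w i) ^ 2)) with
    (rsum n (fun i => v i ^ 2) + 2 * rsum n (fun i => v i * w i) + rsum n (fun i => w i ^ 2)).
  - rewrite <- !vnorm_sq. nra.
  - rewrite <- rsum_mul_l, <- !rsum_add. apply rsum_ext; intros; ring.
Qed.

Lemma vnorm_matvec_le n m (M : nat -> nat -> R) v :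
  vnorm n (fun i => rsum m (fun j => M i j * v j)) <=
  sqrt (rsum n (fun i => rsum m (fun j => M i j ^ 2))) * vnorm m v.
Proof.
  assert (HM : 0 <= rsum n (fun i => rsum m (fun j => M i j ^ 2))).
  { apply rsum_nonneg; intros; apply rsum_nonneg; intros; apply pow2_ge_0. }
  apply vnorm_le_sq; [apply Rmult_le_pos; [apply sqrt_pos|apply vnorm_ge0]|].
  rewrite Rpow_mult_distr, vnorm_sq, <- Rsqr_pow2, Rsqr_sqrt, <- rsum_mul_r by exact HM.
  apply rsum_le. intros i _. apply rsum_cauchy_schwarz.
Qed.

(** * Feedforward networks and their perturbations *)

Section Feedforward.
Variable d : nat -> nat.

Fixpoint feed (V : net) (k : nat) (v : nat -> R) (m : nat) : nat -> R :=
  match m with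
  | O => v
  | S m' => fun i => rsum (d (k + m')) (fun q => V (S (k + m')) i q * feed V k v m' q)
  end.

(* the derivative of [feed V 0 v m] along the weight direction [D] *)
Fixpoint dfeed (V D : net) (v : nat -> R) (m : nat) : nat -> R :=
  match m with
  | O => fun _ => 0
  | S m' => fun i => rsum (d m')
      (fun q => D (S m') i q * feed V 0 v m' q + V (S m') i q * dfeed V D v m' q)
  end.

Definition net_add (V D : net) : net := fun k i j => V k i j + D k i j.

Definition in_ball (m : nat) (c : R) (V : net) : Prop :=
  forall k, (1 <= k <= m)%nat -> frob d V k <= c.

Lemma in_ball_S m c V : in_ball (S m) c V -> in_ball m c V.
Proof. intros H k Hk. apply H. lia. Qed.

Definition frob_sum (D : net) (m : nat) : R := rsum m (fun k => frob d D (S k)).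

Definition evec (j : nat) : nat -> R := fun i => if Nat.eqb j i then 1 else 0.

Lemma prodmx_feed V v m i : (0 < m \/ i < d 0)%nat ->
  rsum (d 0) (fun j => prodmx d V m i j * v j) = feed V 0 v m i.
Proof.
  revert i. induction m as [|m IH]; intros i Hi; simpl.
  - rewrite (rsum_single _ _ i); [|lia|].
    + rewrite Nat.eqb_refl. ring.
    + intros j _ Hj. apply Nat.eqb_neq in Hj. rewrite Nat.eqb_sym, Hj. ring.
  - rewrite (rsum_ext _ _ (fun j => rsum (d m) (fun q => V (S m) i q * (prodmx d V m q j * v j)))).
    + rewrite rsum_comm. apply rsum_ext. intros q Hq.
      rewrite rsum_mul_l, IH; [reflexivity|]. destruct m; lia.
    + intros j _. rewrite <- rsum_mul_r. apply rsum_ext; intros; ring.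
Qed.

Lemma frob_S V m :
  frob d V (S m) = sqrt (rsum (d (S m)) (fun i => rsum (d m) (fun j => V (S m) i j ^ 2))).
Proof. unfold frob. now rewrite Nat.sub_succ, Nat.sub_0_r. Qed.

Lemma frob_ge0 V k : 0 <= frob d V k.
Proof. apply sqrt_pos. Qed.

Lemma frob_sq V m :
  frob d V (S m) ^ 2 = rsum (d (S m)) (fun i => rsum (d m) (fun j => V (S m) i j ^ 2)).
Proof.
  rewrite frob_S, <- Rsqr_pow2. apply Rsqr_sqrt.
  apply rsum_nonneg; intros; apply rsum_nonneg; intros; apply pow2_ge_0.
Qed.

Lemma vnorm_layer_le V m v :
  vnorm (d (S m)) (fun i => rsum (d m) (fun q => V (S m) i q * v q)) <=
  frob d V (S m) * vnorm (d m) v.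
Proof. rewrite frob_S. apply vnorm_matvec_le. Qed.

Lemma vnorm_layer2_le A B m a b :
  vnorm (d (S m)) (fun i => rsum (d m) (fun q => A (S m) i q * a q) +
                            rsum (d m) (fun q => B (S m) i q * b q)) <=
  frob d A (S m) * vnorm (d m) a + frob d B (S m) * vnorm (d m) b.
Proof.
  eapply Rle_trans; [apply vnorm_add_le|].
  apply Rplus_le_compat; apply vnorm_layer_le.
Qed.

Lemma feed_vnorm_le V v c m : 0 <= c -> in_ball m c V ->
  vnorm (d m) (feed V 0 v m) <= c ^ m * vnorm (d 0) v.
Proof.
  intros Hc. induction m as [|m IH]; intros Hball; simpl; [lra|].
  eapply Rle_trans; [apply vnorm_layer_le|].
  assert (IHm : vnorm (d m) (feed V 0 v m) <= c ^ m * vnorm (d 0) v)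
    by (apply IH, in_ball_S, Hball).
  rewrite Rmult_assoc. apply Rmult_le_compat; auto using frob_ge0, vnorm_ge0 with arith.
Qed.

Lemma frob_sum_ge0 D m : 0 <= frob_sum D m.
Proof. apply rsum_nonneg; intros; apply frob_ge0. Qed.

Lemma frob_sum_S D m : frob_sum D (S m) = frob_sum D m + frob d D (S m).
Proof. reflexivity. Qed.

Lemma feed_diff V D v m i :
  feed (net_add V D) 0 v (S m) i - feed V 0 v (S m) i =
  rsum (d m) (fun q => net_add V D (S m) i q * (feed (net_add V D) 0 v m q - feed V 0 v m q)) +
  rsum (d m) (fun q => D (S m) i q * feed V 0 v m q).
Proof. simpl. rewrite <- rsum_sub, <- rsum_add. apply rsum_ext; intros; unfold net_add; ring. Qed.

Lemma feed_taylor V D v m i :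
  feed (net_add V D) 0 v (S m) i - feed V 0 v (S m) i - dfeed V D v (S m) i =
  rsum (d m) (fun q => V (S m) i q *
    (feed (net_add V D) 0 v m q - feed V 0 v m q - dfeed V D v m q)) +
  rsum (d m) (fun q => D (S m) i q * (feed (net_add V D) 0 v m q - feed V 0 v m q)).
Proof. simpl. rewrite <- !rsum_sub, <- rsum_add. apply rsum_ext; intros; unfold net_add; ring. Qed.

Section Perturbation.
Variables (V D : net) (v : nat -> R) (c : R).
Hypothesis Hc : 1 <= c.

(* The factors [c] and [c ^ 2] on the left replace [c ^ (m - 1)] and [c ^ (m - 2)] on the right,
   which truncated subtraction would spoil for small [m]. *)
Lemma feed_diff_le m :
  in_ball m c V ->
  in_ball m c (net_add V D) ->
  c * vnorm (d m) (fun i => feed (net_add V D) 0 v m i - feed V 0 v m i)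
  <= c ^ m * frob_sum D m * vnorm (d 0) v.
Proof.
  induction m as [|m IH]; intros HV HVD.
  - rewrite (vnorm_ext _ _ (fun _ => 0)) by (intros; simpl; ring).
    rewrite vnorm_0. pose proof (vnorm_ge0 (d 0) v). unfold frob_sum; simpl. lra.
  - rewrite (vnorm_ext _ _ _ (fun i _ => feed_diff V D v m i)), frob_sum_S.
    set (Dm := vnorm (d m) (fun q => feed (net_add V D) 0 v m q - feed V 0 v m q)).
    set (Fm := vnorm (d m) (feed V 0 v m)).
    set (nv := vnorm (d 0) v).
    assert (HDm : c * Dm <= c ^ m * frob_sum D m * nv)
      by (apply IH; apply in_ball_S; assumption).
    assert (HFm : Fm <= c ^ m * nv)
      by (apply feed_vnorm_le; [lra|apply in_ball_S, HV]).
    pose proof (vnorm_layer2_le (net_add V D) D m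
      (fun q => feed (net_add V D) 0 v m q - feed V 0 v m q) (feed V 0 v m)) as Hlayer.
    fold Dm Fm in Hlayer.
    pose proof (HVD (S m) ltac:(lia)).
    pose proof (frob_ge0 (net_add V D) (S m)). pose proof (frob_ge0 D (S m)).
    assert (0 <= Dm) by apply vnorm_ge0.
    assert (frob d (net_add V D) (S m) * Dm <= c * Dm) by (apply Rmult_le_compat_r; lra).
    assert (frob d D (S m) * Fm <= frob d D (S m) * (c ^ m * nv))
      by (apply Rmult_le_compat_l; lra).
    simpl pow. nra.
Qed.

Lemma feed_taylor_le m :
  in_ball m c V ->
  in_ball m c (net_add V D) ->
  c ^ 2 * vnorm (d m)
    (fun i => feed (net_add V D) 0 v m i - feed V 0 v m i - dfeed V D v m i)
  <= c ^ m * frob_sum D m ^ 2 * vnorm (d 0) v.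
Proof.
  induction m as [|m IH]; intros HV HVD.
  - rewrite (vnorm_ext _ _ (fun _ => 0)) by (intros; simpl; ring).
    rewrite vnorm_0. pose proof (vnorm_ge0 (d 0) v). unfold frob_sum; simpl. lra.
  - rewrite (vnorm_ext _ _ _ (fun i _ => feed_taylor V D v m i)), frob_sum_S.
    set (Em := vnorm (d m)
      (fun q => feed (net_add V D) 0 v m q - feed V 0 v m q - dfeed V D v m q)).
    set (Dm := vnorm (d m) (fun q => feed (net_add V D) 0 v m q - feed V 0 v m q)).
    set (nv := vnorm (d 0) v).
    set (Sm := frob_sum D m).
    assert (HEm : c ^ 2 * Em <= c ^ m * Sm ^ 2 * nv)
      by (apply IH; apply in_ball_S; assumption).
    assert (HDm : c * Dm <= c ^ m * Sm * nv)
      by (apply feed_diff_le; apply in_ball_S; assumption).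
    pose proof (vnorm_layer2_le V D m
      (fun q => feed (net_add V D) 0 v m q - feed V 0 v m q - dfeed V D v m q)
      (fun q => feed (net_add V D) 0 v m q - feed V 0 v m q)) as Hlayer.
    fold Em Dm in Hlayer.
    pose proof (HV (S m) ltac:(lia)).
    pose proof (frob_ge0 V (S m)). pose proof (frob_ge0 D (S m)).
    assert (0 <= Em) by apply vnorm_ge0.
    assert (0 <= Sm) by apply frob_sum_ge0.
    assert (0 <= nv) by apply vnorm_ge0.
    assert (0 <= c ^ m) by (apply pow_le; lra).
    assert (frob d V (S m) * Em <= c * Em) by (apply Rmult_le_compat_r; lra).
    assert (c * (frob d D (S m) * (c * Dm)) <= c * (frob d D (S m) * (c ^ m * Sm * nv)))
      by (apply Rmult_le_compat_l; [lra|apply Rmult_le_compat_l; lra]).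
    assert (c * (c ^ 2 * Em) <= c * (c ^ m * Sm ^ 2 * nv)) by (apply Rmult_le_compat_l; lra).
    assert (0 <= c ^ m * nv * frob d D (S m) * (Sm + frob d D (S m)))
      by (repeat apply Rmult_le_pos; lra).
    simpl pow. nra.
Qed.
End Perturbation.

Lemma feed_single_layer V D v k m i : (1 <= k)%nat ->
  (forall k' i' j', k' <> k -> D k' i' j' = 0) ->
  feed (net_add V D) 0 v m i = feed V 0 v m i + dfeed V D v m i.
Proof.
  intros Hk HD.
  assert (Hlow : forall m, (m < k)%nat -> forall i, feed (net_add V D) 0 v m i = feed V 0 v m i).
  { clear m i. induction m as [|m IH]; intros Hm i; [reflexivity|].
    apply Rminus_diag_uniq. rewrite feed_diff, (rsum_ext _ _ (fun _ => 0)),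
      (rsum_ext (d m) (fun q => D (S m) i q * _) (fun _ => 0)), rsum_0; [ring| |];
      intros q _; [rewrite HD by lia|rewrite IH by lia]; ring. }
  enough (feed (net_add V D) 0 v m i - feed V 0 v m i - dfeed V D v m i = 0) by lra.
  revert i. induction m as [|m IH]; intros i; [simpl; ring|].
  rewrite feed_taylor, (rsum_ext _ _ (fun _ => 0)),
    (rsum_ext (d m) (fun q => D (S m) i q * _) (fun _ => 0)), rsum_0; [ring| |].
  - intros q _. destruct (Nat.eq_dec (S m) k) as [E|E].
    + rewrite Hlow by lia. ring.
    + rewrite HD by exact E. ring.
  - intros q _. rewrite IH. ring.
Qed.

Lemma dfeed_add V D1 D2 v m i :
  dfeed V (fun k i j => D1 k i j + D2 k i j) v m i = dfeed V D1 v m i + dfeed V D2 v m i.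
Proof.
  revert i; induction m as [|m IH]; intros i; simpl; [ring|].
  rewrite <- rsum_add. apply rsum_ext; intros q _. rewrite IH. ring.
Qed.

Lemma dfeed_scal V a D v m i :
  dfeed V (fun k i j => a * D k i j) v m i = a * dfeed V D v m i.
Proof.
  revert i; induction m as [|m IH]; intros i; simpl; [ring|].
  rewrite <- rsum_mul_l. apply rsum_ext; intros q _. rewrite IH. ring.
Qed.

Lemma dfeed_0 V v m i : dfeed V (fun _ _ _ => 0) v m i = 0.
Proof.
  revert i; induction m as [|m IH]; intros i; simpl; [ring|].
  rewrite (rsum_ext _ _ (fun _ => 0)), rsum_0; [ring|]. intros q _. rewrite IH. ring.
Qed.

Lemma dfeed_rsum V N (F : nat -> net) v m i :
  dfeed V (fun k i j => rsum N (fun a => F a k i j)) v m i = rsum N (fun a => dfeed V (F a) v m i).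
Proof.
  induction N as [|N IH]; simpl; [apply dfeed_0|].
  rewrite <- IH. apply (dfeed_add V (fun k i j => rsum N (fun a => F a k i j)) (F N)).
Qed.

Lemma dfeed_ext V D D' v L :
  (forall k i j, (1 <= k <= L)%nat -> (i < d k)%nat -> (j < d (k - 1))%nat -> D k i j = D' k i j) ->
  forall m i, (m <= L)%nat -> (i < d m)%nat -> dfeed V D v m i = dfeed V D' v m i.
Proof.
  intros H m. induction m as [|m IH]; intros i Hm Hi; simpl; [reflexivity|].
  apply rsum_ext; intros q Hq. rewrite IH, H; auto; try lia.
  now rewrite Nat.sub_succ, Nat.sub_0_r.
Qed.

Lemma feed_shift V v m i : feed V 0 v (S m) i = feed V 1 (feed V 0 v 1) m i.
Proof.
  revert i. induction m as [|m IH]; intros i; [reflexivity|].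
  change (rsum (d (S m)) (fun q => V (S (S m)) i q * feed V 0 v (S m) q) =
          rsum (d (S m)) (fun q => V (S (S m)) i q * feed V 1 (feed V 0 v 1) m q)).
  apply rsum_ext; intros. now rewrite IH.
Qed.

Lemma dfeed_shift V D v : (forall k i j, (2 <= k)%nat -> D k i j = 0) ->
  forall m i, dfeed V D v (S m) i = feed V 1 (dfeed V D v 1) m i.
Proof.
  intros HD m. induction m as [|m IH]; intros i; [reflexivity|].
  change (rsum (d (S m)) (fun q => D (S (S m)) i q * feed V 0 v (S m) q +
                                   V (S (S m)) i q * dfeed V D v (S m) q) =
          rsum (d (S m)) (fun q => V (S (S m)) i q * feed V 1 (dfeed V D v 1) m q)).
  apply rsum_ext; intros. rewrite IH, HD by lia. ring.
Qed.

Lemma feed_scal V k a v m i : feed V k (fun j => a * v j) m i = a * feed V k v m i.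
Proof.
  revert i. induction m as [|m IH]; intros i; simpl; [reflexivity|].
  rewrite <- rsum_mul_l. apply rsum_ext; intros. rewrite IH. ring.
Qed.

Lemma feed_evec V k v m i : (0 < m \/ i < d k)%nat ->
  feed V k v m i = rsum (d k) (fun j => v j * feed V k (evec j) m i).
Proof.
  revert i. induction m as [|m IH]; intros i Hi; simpl.
  - rewrite (rsum_single _ _ i); [| lia |].
    + unfold evec. rewrite Nat.eqb_refl. ring.
    + intros j _ Hj. unfold evec. apply Nat.eqb_neq in Hj. rewrite Hj. ring.
  - rewrite (rsum_ext _ _
      (fun q => rsum (d k) (fun j => V (S (k + m)) i q * (v j * feed V k (evec j) m q)))).
    + rewrite rsum_comm. apply rsum_ext; intros j _.
      rewrite <- rsum_mul_l. apply rsum_ext; intros; ring.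
    + intros q Hq. rewrite IH, <- rsum_mul_l; [reflexivity|].
      destruct m; [rewrite Nat.add_0_r in Hq|]; lia.
Qed.

Definition netsum (L : nat) (F : net) : R :=
  rsum L (fun k => rsum (d (S k)) (fun i => rsum (d k) (fun j => F (S k) i j))).

Definition net_unit (k i j : nat) : net := fun k' i' j' =>
  if (Nat.eqb k k' && Nat.eqb i i' && Nat.eqb j j')%bool then 1 else 0.

Lemma netsum_ext L F F' :
  (forall k i j, (1 <= k <= L)%nat -> (i < d k)%nat -> (j < d (k - 1))%nat -> F k i j = F' k i j) ->
  netsum L F = netsum L F'.
Proof.
  intros H. unfold netsum.
  apply rsum_ext; intros; apply rsum_ext; intros; apply rsum_ext; intros.
  apply H; [lia|assumption|now rewrite Nat.sub_succ, Nat.sub_0_r].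
Qed.

Lemma netsum_add L F F' : netsum L (fun k i j => F k i j + F' k i j) = netsum L F + netsum L F'.
Proof.
  unfold netsum. rewrite <- rsum_add. apply rsum_ext; intros.
  rewrite <- rsum_add. apply rsum_ext; intros. apply rsum_add.
Qed.

Lemma netsum_mul_l L a F : netsum L (fun k i j => a * F k i j) = a * netsum L F.
Proof.
  unfold netsum. rewrite <- rsum_mul_l. apply rsum_ext; intros.
  rewrite <- rsum_mul_l. apply rsum_ext; intros. apply rsum_mul_l.
Qed.

Lemma netsum_rsum L N (F : nat -> net) :
  netsum L (fun k i j => rsum N (fun a => F a k i j)) = rsum N (fun a => netsum L (F a)).
Proof.
  unfold netsum. symmetry. rewrite rsum_comm. apply rsum_ext; intros.
  rewrite rsum_comm. apply rsum_ext; intros. apply rsum_comm.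
Qed.

Lemma netsum_nonneg L F : (forall k i j, 0 <= F k i j) -> 0 <= netsum L F.
Proof. intros H. unfold netsum. repeat (apply rsum_nonneg; intros). auto. Qed.

Lemma netsum_sq_pos L F :
  (exists k i j, (1 <= k <= L)%nat /\ (i < d k)%nat /\ (j < d (k - 1))%nat /\ F k i j <> 0) ->
  0 < netsum L (fun k i j => F k i j ^ 2).
Proof.
  intros [k [i [j [Hk [Hi [Hj Hnz]]]]]]. unfold netsum.
  destruct k as [|k]; [lia|]. rewrite Nat.sub_succ, Nat.sub_0_r in Hj.
  assert (Hsq : forall k i j, 0 <= F k i j ^ 2) by (intros; apply pow2_ge_0).
  apply rsum_pos; [intros; repeat (apply rsum_nonneg; intros); auto|].
  exists k. split; [lia|].
  apply rsum_pos; [intros; repeat (apply rsum_nonneg; intros); auto|].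
  exists i. split; [assumption|].
  apply rsum_pos; [intros; auto|]. exists j. split; [assumption|].
  rewrite <- Rsqr_pow2. now apply Rsqr_pos_lt.
Qed.

Lemma netsum_cauchy_schwarz L F F' :
  netsum L (fun k i j => F k i j * F' k i j) ^ 2 <=
  netsum L (fun k i j => F k i j ^ 2) * netsum L (fun k i j => F' k i j ^ 2).
Proof.
  apply discriminant_le; [apply netsum_nonneg; intros; apply pow2_ge_0|]. intros l.
  rewrite <- !netsum_mul_l.
  replace (netsum L (fun k i j => F k i j ^ 2) -
           netsum L (fun k i j => 2 * l * (F k i j * F' k i j)))
    with (netsum L (fun k i j => F k i j ^ 2 + -1 * (2 * l * (F k i j * F' k i j))))
    by (rewrite netsum_add, netsum_mul_l; ring).
  rewrite <- netsum_add. apply netsum_nonneg. intros.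
  replace (_ + _) with ((F k i j - l * F' k i j) ^ 2) by ring. apply pow2_ge_0.
Qed.

Lemma netsum_unit L D k i j : (1 <= k <= L)%nat -> (i < d k)%nat -> (j < d (k - 1))%nat ->
  netsum L (fun k' i' j' => D k' i' j' * net_unit k' i' j' k i j) = D k i j.
Proof.
  intros Hk Hi Hj. unfold netsum, net_unit.
  destruct k as [|k]; [lia|]. rewrite Nat.sub_succ, Nat.sub_0_r in Hj.
  rewrite (rsum_single L _ k); [|lia|].
  2:{ intros k' _ Hne. rewrite (rsum_ext _ _ (fun _ => 0)), rsum_0; [reflexivity|].
      intros. rewrite (rsum_ext _ _ (fun _ => 0)), rsum_0; [reflexivity|]. intros.
      replace (Nat.eqb (S k') (S k)) with false by (symmetry; apply Nat.eqb_neq; lia).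
      simpl; ring. }
  rewrite (rsum_single _ _ i); [|assumption|].
  2:{ intros i' _ Hne. rewrite (rsum_ext _ _ (fun _ => 0)), rsum_0; [reflexivity|]. intros.
      apply Nat.eqb_neq in Hne. rewrite Hne, Bool.andb_false_r. simpl; ring. }
  rewrite (rsum_single _ _ j); [|assumption|].
  2:{ intros j' _ Hne. apply Nat.eqb_neq in Hne. rewrite Hne, Bool.andb_false_r. ring. }
  rewrite !Nat.eqb_refl. simpl. ring.
Qed.

Lemma dfeed_netsum V D v L i : (i < d L)%nat ->
  dfeed V D v L i = netsum L (fun k i' j => D k i' j * dfeed V (net_unit k i' j) v L i).
Proof.
  intros Hi.
  rewrite (dfeed_ext V D (fun k' i' j' => netsum L (fun k i j => D k i j * net_unit k i j k' i' j'))
    v L) with (m := L) by (auto || (intros; symmetry; apply netsum_unit; auto)).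
  unfold netsum at 1. rewrite dfeed_rsum. unfold netsum. apply rsum_ext; intros k _.
  rewrite dfeed_rsum. apply rsum_ext; intros i' _.
  rewrite dfeed_rsum. apply rsum_ext; intros j _.
  apply dfeed_scal.
Qed.

Lemma frob_sum_sq_le D L : frob_sum D L ^ 2 <= INR L * netsum L (fun k i j => D k i j ^ 2).
Proof.
  unfold frob_sum. rewrite (rsum_ext L _ (fun k => frob d D (S k) * 1)) by (intros; ring).
  eapply Rle_trans; [apply (rsum_cauchy_schwarz L (fun k => frob d D (S k)) (fun _ => 1))|].
  rewrite (rsum_ext L (fun _ => 1 ^ 2) (fun _ => 1)), rsum_const by (intros; ring).
  rewrite Rmult_1_r, Rmult_comm. apply Rmult_le_compat_l; [apply pos_INR|].
  right. apply rsum_ext. intros k _. apply frob_sq.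
Qed.

End Feedforward.

(** * The gradient of the risk *)

Lemma derivable_pt_lim_rsum N (F : nat -> R -> R) F' s :
  (forall a, (a < N)%nat -> derivable_pt_lim (F a) s (F' a)) ->
  derivable_pt_lim (fun t => rsum N (fun a => F a t)) s (rsum N F').
Proof.
  induction N as [|N IH]; intros H; simpl; [apply derivable_pt_lim_const|].
  apply (derivable_pt_lim_plus (fun t => rsum N (fun a => F a t)) (F N)); auto.
Qed.

Lemma derivable_pt_lim_comp_affine f f' p c s0 :
  (forall t, derivable_pt_lim f t (f' t)) ->
  derivable_pt_lim (fun s => f (p + (s - s0) * c)) s0 (f' p * c).
Proof.
  intros Hf.
  assert (Haff : derivable_pt_lim (fun s => p + (s - s0) * c) s0 c).
  { apply (derivable_pt_lim_ext (fct_cte (p - s0 * c) + mult_real_fct c id)%F).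
    - intros; unfold fct_cte, mult_real_fct, id, plus_fct; ring.
    - pose proof (derivable_pt_lim_plus _ _ s0 _ _ (derivable_pt_lim_const (p - s0 * c) s0)
        (derivable_pt_lim_scal id c s0 1 (derivable_pt_lim_id s0))) as H.
      now replace (0 + c * 1) with c in H by ring. }
  pose proof (derivable_pt_lim_comp _ f s0 c (f' p) Haff) as H. cbv beta in H.
  replace (p + (s0 - s0) * c) with p in H by ring. exact (H (Hf p)).
Qed.

Section Gradient.
Variables (loss dloss : R -> R) (n : nat) (d : nat -> nat) (L : nat).
Variables (x : nat -> nat -> R) (y : nat -> R).
Hypothesis Hder : forall t, derivable_pt_lim loss t (dloss t).

Definition margin (V : net) (a : nat) : R := feed d V 0 (zdat x y a) L 0.

Lemma margin_upd V k i j s a : (1 <= k)%nat ->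
  margin (upd V k i j s) a =
  margin V a + (s - V k i j) * dfeed d V (net_unit k i j) (zdat x y a) L 0.
Proof.
  intros Hk. unfold margin.
  replace (upd V k i j s)
    with (net_add V (fun k' i' j' => (s - V k i j) * net_unit k i j k' i' j')).
  - rewrite (feed_single_layer d V _ _ k), dfeed_scal; [reflexivity|assumption|].
    intros k' i' j' Hne. unfold net_unit.
    replace (Nat.eqb k k') with false by (symmetry; apply Nat.eqb_neq; lia). simpl. ring.
  - apply functional_extensionality; intros k'. apply functional_extensionality; intros i'.
    apply functional_extensionality; intros j'. unfold upd, net_add, net_unit.
    destruct (Nat.eqb_spec k k'), (Nat.eqb_spec i i'), (Nat.eqb_spec j j'); simpl; subst; ring.
Qed.

Hypothesis HL : (1 <= L)%nat.

Lemma risk_margin V : risk loss n d L x y V = / INR n * rsum n (fun a => loss (margin V a)).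
Proof.
  unfold risk, margin, wprod. f_equal. apply rsum_ext; intros a _. f_equal.
  apply prodmx_feed. lia.
Qed.

Lemma grad_entry V g : is_grad loss n d L x y V g ->
  forall k i j, (1 <= k <= L)%nat -> (i < d k)%nat -> (j < d (k - 1))%nat ->
  g k i j = / INR n * rsum n (fun a =>
    dloss (margin V a) * dfeed d V (net_unit k i j) (zdat x y a) L 0).
Proof.
  intros Hg k i j Hk Hi Hj.
  apply (uniqueness_limite (fun s => risk loss n d L x y (upd V k i j s)) (V k i j));
    [now apply Hg|].
  apply (derivable_pt_lim_ext (fun s => / INR n * rsum n (fun a => loss (margin V a +
    (s - V k i j) * dfeed d V (net_unit k i j) (zdat x y a) L 0)))).
  { intros s. rewrite risk_margin. f_equal. apply rsum_ext; intros.
    rewrite margin_upd by lia. reflexivity. }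
  apply derivable_pt_lim_scal, derivable_pt_lim_rsum.
  intros a _. now apply derivable_pt_lim_comp_affine.
Qed.

Hypothesis HdL : d L = 1%nat.

Lemma netsum_grad_mul V g D : is_grad loss n d L x y V g ->
  netsum d L (fun k i j => g k i j * D k i j) =
  / INR n * rsum n (fun a => dloss (margin V a) * dfeed d V D (zdat x y a) L 0).
Proof.
  intros Hg.
  rewrite (netsum_ext d L _ (fun k i j => / INR n * rsum n (fun a => dloss (margin V a) *
    (D k i j * dfeed d V (net_unit k i j) (zdat x y a) L 0)))).
  2:{ intros k i j Hk Hi Hj. rewrite (grad_entry V g Hg k i j Hk Hi Hj), Rmult_assoc.
      f_equal. rewrite <- rsum_mul_r. apply rsum_ext; intros; ring. }
  rewrite netsum_mul_l, netsum_rsum. f_equal. apply rsum_ext; intros a _.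
  rewrite netsum_mul_l, (dfeed_netsum d V D _ L 0); [reflexivity|lia].
Qed.

End Gradient.

(** * Descent inside the ball *)

Lemma margin_perturbation (d : nat -> nat) L x y V D c a : 1 <= c -> (1 <= L)%nat -> d L = 1%nat ->
  vnorm (d 0%nat) (zdat x y a) <= 1 -> in_ball d L c V -> in_ball d L c (net_add V D) ->
  Rabs (margin d L x y (net_add V D) a - margin d L x y V a) <= c ^ (L - 1) * frob_sum d D L /\
  Rabs (margin d L x y (net_add V D) a - margin d L x y V a - dfeed d V D (zdat x y a) L 0)
    <= (c ^ (L - 1) * frob_sum d D L) ^ 2.
Proof.
  intros Hc HL HdL Hz HV HVD.
  pose proof (feed_diff_le d V D (zdat x y a) c Hc L HV HVD) as Hdiff.
  pose proof (feed_taylor_le d V D (zdat x y a) c Hc L HV HVD) as Htaylor.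
  rewrite HdL, vnorm_1 in Hdiff, Htaylor. fold (margin d L x y (net_add V D) a) in *.
  fold (margin d L x y V a) in *.
  set (P := c ^ (L - 1)) in *. set (Sg := frob_sum d D L) in *.
  assert (HcL : c ^ L = c * P) by (unfold P; rewrite tech_pow_Rmult; f_equal; lia).
  rewrite HcL in Hdiff, Htaylor.
  assert (HP : 1 <= P) by (apply pow_R1_Rle; lra).
  assert (HSg : 0 <= Sg) by apply frob_sum_ge0.
  pose proof (vnorm_ge0 (d 0%nat) (zdat x y a)).
  assert (HPS : 0 <= P * Sg) by (apply Rmult_le_pos; lra).
  split.
  - apply (Rmult_le_reg_l c); [lra|]. eapply Rle_trans; [exact Hdiff|].
    replace (c * (P * Sg)) with (c * P * Sg * 1) by ring.
    apply Rmult_le_compat_l; [apply Rmult_le_pos; [apply Rmult_le_pos|]; lra|exact Hz].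
  - apply (Rmult_le_reg_l (c ^ 2)); [nra|]. eapply Rle_trans; [exact Htaylor|].
    assert (0 <= Sg ^ 2) by apply pow2_ge_0.
    assert (c * P * Sg ^ 2 * vnorm (d 0%nat) (zdat x y a) <= c * P * Sg ^ 2)
      by (rewrite <- (Rmult_1_r (c * P * Sg ^ 2)) at 2; apply Rmult_le_compat_l;
          [apply Rmult_le_pos; [apply Rmult_le_pos|]; lra|lra]).
    assert (c * P * Sg ^ 2 <= c ^ 2 * (P * Sg) ^ 2).
    { replace (c * P * Sg ^ 2) with (c * 1 * (1 * P * Sg ^ 2)) by ring.
      replace (c ^ 2 * (P * Sg) ^ 2) with (c * c * (P * P * Sg ^ 2)) by ring.
      apply Rmult_le_compat; try nra. }
    lra.
Qed.

Section Descent.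
Variables (loss dloss : R -> R) (beta G : R).
Hypothesis Hder : forall t, derivable_pt_lim loss t (dloss t).
Hypothesis Hlip : forall s t, Rabs (dloss s - dloss t) <= beta * Rabs (s - t).
Hypothesis Hbd : forall t, Rabs (dloss t) <= G.

Lemma lipschitz_const_ge0 : 0 <= beta.
Proof.
  specialize (Hlip 1 0). pose proof (Rabs_pos (dloss 1 - dloss 0)).
  rewrite Rminus_0_r, Rabs_R1 in Hlip. lra.
Qed.

Lemma loss_le_tangent a b : loss b - loss a <= dloss a * (b - a) + beta * (b - a) ^ 2.
Proof.
  pose proof lipschitz_const_ge0.
  destruct (Rtotal_order a b) as [Hab|[<-|Hab]].
  - destruct (MVT_cor2 loss dloss a b Hab (fun c _ => Hder c)) as [c [-> Hc]].
    specialize (Hlip c a). rewrite (Rabs_right (c - a)) in Hlip by lra.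
    pose proof (Rle_abs (dloss c - dloss a)).
    assert (dloss c <= dloss a + beta * (b - a)) by nra.
    assert (dloss c * (b - a) <= (dloss a + beta * (b - a)) * (b - a))
      by (apply Rmult_le_compat_r; lra).
    nra.
  - replace (a - a) with 0 by ring. nra.
  - destruct (MVT_cor2 loss dloss b a Hab (fun c _ => Hder c)) as [c [Hmvt Hc]].
    replace (loss b - loss a) with (- (loss a - loss b)) by ring. rewrite Hmvt.
    specialize (Hlip c a). rewrite (Rabs_left (c - a)), Rabs_minus_sym in Hlip by lra.
    pose proof (Rle_abs (dloss a - dloss c)).
    assert (dloss a - beta * (a - b) <= dloss c) by nra.
    assert ((dloss a - beta * (a - b)) * (a - b) <= dloss c * (a - b))
      by (apply Rmult_le_compat_r; lra).
    nra.
Qed.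

Lemma loss_second_order a b c e : Rabs (b - a) <= e -> Rabs (b - a - c) <= e ^ 2 ->
  loss b <= loss a + dloss a * c + (G + beta) * e ^ 2.
Proof.
  intros H1 H2. pose proof (loss_le_tangent a b). pose proof lipschitz_const_ge0.
  assert (Hsq : (b - a) ^ 2 <= e ^ 2).
  { rewrite <- (pow2_abs (b - a)). pose proof (Rabs_pos (b - a)). apply pow_incr. lra. }
  assert (Hrem : dloss a * (b - a - c) <= G * e ^ 2).
  { eapply Rle_trans; [apply Rle_abs|]. rewrite Rabs_mult.
    apply Rmult_le_compat; auto using Rabs_pos. }
  assert (beta * (b - a) ^ 2 <= beta * e ^ 2) by (apply Rmult_le_compat_l; lra).
  replace (dloss a * (b - a)) with (dloss a * c + dloss a * (b - a - c)) in * by ring.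
  lra.
Qed.

Lemma descent n (d : nat -> nat) L x y V V' g eta c :
  (0 < n)%nat -> (1 <= L)%nat -> d L = 1%nat ->
  (forall a, (a < n)%nat -> vnorm (d 0%nat) (zdat x y a) <= 1) -> 1 <= c ->
  is_grad loss n d L x y V g -> (forall k i j, V' k i j = V k i j - eta * g k i j) ->
  0 < eta -> eta * (G + beta) * (c ^ (L - 1)) ^ 2 * INR L <= 1 / 2 ->
  in_ball d L c V -> in_ball d L c V' ->
  risk loss n d L x y V' <= risk loss n d L x y V - eta / 2 * netsum d L (fun k i j => g k i j ^ 2).
Proof.
  intros Hn HL HdL Hz Hc Hg HV' Heta Hstep HV HVD.
  set (D := fun k i j => - eta * g k i j).
  replace V' with (net_add V D) in *
    by (do 3 (apply functional_extensionality; intro); unfold net_add, D; rewrite HV'; ring).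
  set (Sg := netsum d L (fun k i j => g k i j ^ 2)).
  assert (HSg : 0 <= Sg) by (apply netsum_nonneg; intros; apply pow2_ge_0).
  set (P := c ^ (L - 1)).
  set (K := (G + beta) * P ^ 2 * (INR L * (eta ^ 2 * Sg))).
  assert (HK : (G + beta) * (P * frob_sum d D L) ^ 2 <= K).
  { unfold K. rewrite Rpow_mult_distr, <- Rmult_assoc.
    apply Rmult_le_compat_l; [pose proof (Rabs_pos (dloss 0)); specialize (Hbd 0);
      pose proof lipschitz_const_ge0; apply Rmult_le_pos; [lra|apply pow2_ge_0]|].
    eapply Rle_trans; [apply frob_sum_sq_le|]. right. f_equal.
    unfold Sg. rewrite <- netsum_mul_l. apply netsum_ext; intros. unfold D. ring. }
  assert (Hstep_gain : K <= eta / 2 * Sg).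
  { unfold K. replace ((G + beta) * P ^ 2 * (INR L * (eta ^ 2 * Sg)))
      with ((eta * (G + beta) * P ^ 2 * INR L) * (eta * Sg)) by ring.
    replace (eta / 2 * Sg) with (1 / 2 * (eta * Sg)) by field.
    apply Rmult_le_compat_r; [apply Rmult_le_pos; lra|exact Hstep]. }
  assert (Hex : forall a, (a < n)%nat -> loss (margin d L x y (net_add V D) a) <=
    loss (margin d L x y V a) + dloss (margin d L x y V a) * dfeed d V D (zdat x y a) L 0 + K).
  { intros a Ha.
    destruct (margin_perturbation d L x y V D c a Hc HL HdL (Hz a Ha) HV HVD) as [H1 H2].
    pose proof (loss_second_order _ _ _ _ H1 H2) as H. fold P in H. lra. }
  assert (Hinner : netsum d L (fun k i j => g k i j * D k i j) = - eta * Sg).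
  { unfold Sg. rewrite <- netsum_mul_l. apply netsum_ext; intros. unfold D. ring. }
  rewrite (netsum_grad_mul loss dloss n d L x y Hder HL HdL V g D Hg) in Hinner.
  rewrite !risk_margin by assumption.
  assert (HnR : 0 < / INR n) by (apply Rinv_0_lt_compat, lt_0_INR; lia).
  assert (Hsum := rsum_le n _ _ Hex).
  rewrite !rsum_add, rsum_const in Hsum.
  apply (Rmult_le_compat_l (/ INR n)) in Hsum; [|lra].
  rewrite !Rmult_plus_distr_l, Hinner in Hsum.
  replace (/ INR n * (INR n * K)) with K in Hsum by (field; apply not_0_INR; lia).
  lra.
Qed.

End Descent.

(** * A uniform lower bound on the gradient *)

Lemma rsum_sq_pos_of_dot_pos n u v :
  0 < rsum n (fun j => u j * v j) -> 0 < rsum n (fun j => u j ^ 2).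
Proof.
  intros H. pose proof (rsum_cauchy_schwarz n u v).
  assert (0 <= rsum n (fun j => u j ^ 2)) by (apply rsum_nonneg; intros; apply pow2_ge_0).
  assert (0 <= rsum n (fun j => v j ^ 2)) by (apply rsum_nonneg; intros; apply pow2_ge_0).
  destruct (Req_dec (rsum n (fun j => u j ^ 2)) 0) as [E|E]; [|lra].
  rewrite E in *. nra.
Qed.

Definition grad_lb (d : nat -> nat) (x : nat -> nat -> R) (y : nat -> R) (n : nat)
  (c delta M : R) (u : nat -> R) : R :=
  (delta / c) ^ 2 * (M * rsum (d 0%nat) (fun j => u j * zdat x y 0%nat j) / INR n) ^ 2
    / rsum (d 0%nat) (fun j => u j ^ 2).

Lemma grad_lb_pos d x y n c delta M u : (0 < n)%nat -> 0 < c -> 0 < delta -> M < 0 ->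
  0 < rsum (d 0%nat) (fun j => u j * zdat x y 0%nat j) -> 0 < grad_lb d x y n c delta M u.
Proof.
  intros Hn Hc Hdelta HM Hc0. unfold grad_lb. pose proof (rsum_sq_pos_of_dot_pos _ _ _ Hc0).
  assert (0 < / INR n) by (apply Rinv_0_lt_compat, lt_0_INR; lia).
  set (c0 := rsum (d 0%nat) (fun j => u j * zdat x y 0%nat j)) in *.
  assert (M * c0 / INR n < 0) by (unfold Rdiv; assert (M * c0 < 0) by nra; nra).
  apply Rdiv_lt_0_compat; [|assumption].
  apply Rmult_lt_0_compat; [apply pow_lt, Rdiv_lt_0_compat; lra|].
  nra.
Qed.

Section LowerBound.
Variables (d : nat -> nat) (L : nat) (x : nat -> nat -> R) (y : nat -> R).
Hypothesis HL : (1 <= L)%nat.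

(* the row vector W_L ... W_2 *)
Definition upper_row (V : net) : nat -> R := fun j => feed d V 1 (evec j) (L - 1) 0.

Definition layer1_dir (r u : nat -> R) : net :=
  fun k i j => if Nat.eqb k 1 then r i * u j else 0.

Lemma netsum_layer1_dir_sq r u :
  netsum d L (fun k i j => layer1_dir r u k i j ^ 2) =
  rsum (d 1) (fun i => r i ^ 2) * rsum (d 0%nat) (fun j => u j ^ 2).
Proof.
  unfold netsum. rewrite (rsum_single L _ 0%nat); [|lia|].
  - rewrite <- rsum_mul_r. apply rsum_ext; intros.
    rewrite <- rsum_mul_l. apply rsum_ext; intros. unfold layer1_dir. simpl. ring.
  - intros k _ Hk. rewrite (rsum_ext _ _ (fun _ => 0)), rsum_0; [reflexivity|]. intros.
    rewrite (rsum_ext _ _ (fun _ => 0)), rsum_0; [reflexivity|]. intros. unfold layer1_dir.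
    replace (Nat.eqb (S k) 1) with false by (symmetry; apply Nat.eqb_neq; lia). ring.
Qed.

Hypothesis HdL : d L = 1%nat.

Lemma L_pred_or_d1 : (0 < L - 1 \/ 0 < d 1)%nat.
Proof. destruct (Nat.eq_dec L 1) as [E|E]; [right; rewrite <- E, HdL|left]; lia. Qed.

Lemma margin_upper_row V a :
  margin d L x y V a = rsum (d 1) (fun j => feed d V 0 (zdat x y a) 1 j * upper_row V j).
Proof.
  unfold margin, upper_row. replace L with (S (L - 1)) at 1 by lia.
  rewrite feed_shift, feed_evec by apply L_pred_or_d1. reflexivity.
Qed.

Lemma margin_abs_le V c a : 0 <= c -> in_ball d L c V ->
  vnorm (d 0%nat) (zdat x y a) <= 1 -> Rabs (margin d L x y V a) <= c ^ L.
Proof.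
  intros Hc HV Hz. unfold margin. rewrite <- vnorm_1, <- HdL.
  eapply Rle_trans; [apply feed_vnorm_le; eassumption|].
  rewrite <- (Rmult_1_r (c ^ L)) at 2. apply Rmult_le_compat_l; [apply pow_le|]; assumption.
Qed.

Lemma margin_le_upper_row V c a : 0 <= c -> in_ball d L c V ->
  vnorm (d 0%nat) (zdat x y a) <= 1 -> margin d L x y V a <= c * vnorm (d 1) (upper_row V).
Proof.
  intros Hc HV Hz. rewrite margin_upper_row.
  eapply Rle_trans; [apply dot_le_vnorm|]. apply Rmult_le_compat_r; [apply vnorm_ge0|].
  eapply Rle_trans; [apply (feed_vnorm_le d V _ c 1 Hc); intros k Hk; apply HV; lia|].
  rewrite pow_1. rewrite <- (Rmult_1_r c) at 2. apply Rmult_le_compat_l; assumption.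
Qed.

Lemma dfeed_layer1_dir V u v :
  dfeed d V (layer1_dir (upper_row V) u) v L 0 =
  rsum (d 0%nat) (fun j => u j * v j) * rsum (d 1) (fun j => upper_row V j ^ 2).
Proof.
  replace L with (S (L - 1)) at 1 by lia.
  rewrite dfeed_shift.
  2:{ intros k i j Hk. unfold layer1_dir.
      replace (Nat.eqb k 1) with false by (symmetry; apply Nat.eqb_neq; lia). reflexivity. }
  replace (dfeed d V (layer1_dir (upper_row V) u) v 1)
    with (fun i => rsum (d 0%nat) (fun j => u j * v j) * upper_row V i).
  - rewrite feed_scal, (feed_evec d V 1 (upper_row V)) by apply L_pred_or_d1.
    f_equal. apply rsum_ext. intros j _. unfold upper_row. ring.
  - apply functional_extensionality. intros i. simpl. rewrite <- rsum_mul_r.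
    apply rsum_ext. intros j _. unfold layer1_dir. simpl. ring.
Qed.

Variables (loss dloss : R -> R) (n : nat).
Hypothesis Hder : forall t, derivable_pt_lim loss t (dloss t).

(* Testing the gradient against the rank-one first-layer direction [upper_row V * u^T] gives
   [<g, dir> = |upper_row V|^2 * (1/n) sum_a dloss (margin a) <u, z_a>], which stays away from 0
   because every margin is bounded and some margin is at least [delta]; Cauchy-Schwarz then
   bounds [|g|^2] from below. *)
Lemma grad_sq_ge V g c u delta M :
  (0 < n)%nat -> (forall a, (a < n)%nat -> vnorm (d 0%nat) (zdat x y a) <= 1) -> 1 <= c ->
  is_grad loss n d L x y V g -> in_ball d L c V ->
  (forall a, (a < n)%nat -> 0 < rsum (d 0%nat) (fun j => u j * zdat x y a j)) ->
  0 < delta -> (exists a, (a < n)%nat /\ delta <= margin d L x y V a) ->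
  M < 0 -> (forall t, Rabs t <= c ^ L -> dloss t <= M) ->
  grad_lb d x y n c delta M u <= netsum d L (fun k i j => g k i j ^ 2).
Proof.
  intros Hn Hz Hc Hg HV Hu Hdelta [a0 [Ha0 Hmargin]] HM HMb.
  set (r := upper_row V). set (N2 := rsum (d 1) (fun i => r i ^ 2)).
  set (U2 := rsum (d 0%nat) (fun j => u j ^ 2)).
  set (cz := fun a => rsum (d 0%nat) (fun j => u j * zdat x y a j)).
  set (Gam := / INR n * rsum n (fun a => dloss (margin d L x y V a) * cz a)).
  set (Sg := netsum d L (fun k i j => g k i j ^ 2)).
  assert (HU2 : 0 < U2) by (apply (rsum_sq_pos_of_dot_pos _ _ (zdat x y 0%nat)), Hu, Hn).
  assert (HN2 : (delta / c) ^ 2 <= N2).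
  { unfold N2. rewrite <- vnorm_sq. apply pow_incr.
    split; [apply Rlt_le, Rdiv_lt_0_compat; lra|].
    apply (Rmult_le_reg_l c); [lra|]. replace (c * (delta / c)) with delta by (field; lra).
    eapply Rle_trans; [exact Hmargin|]. apply margin_le_upper_row; auto; lra. }
  assert (HN2pos : 0 < N2)
    by (eapply Rlt_le_trans; [|exact HN2]; apply pow_lt, Rdiv_lt_0_compat; lra).
  assert (Hinner : netsum d L (fun k i j => g k i j * layer1_dir r u k i j) = N2 * Gam).
  { rewrite (netsum_grad_mul loss dloss n d L x y Hder HL HdL V g _ Hg). unfold Gam.
    rewrite (rsum_ext n _ (fun a => N2 * (dloss (margin d L x y V a) * cz a))), rsum_mul_l;
      [ring|].
    intros a _. rewrite dfeed_layer1_dir. unfold cz, N2, r. ring. }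
  assert (HnR : 0 < INR n) by (apply lt_0_INR; lia).
  assert (HnR' : 0 < / INR n) by (apply Rinv_0_lt_compat, HnR).
  assert (HGam : Gam <= / INR n * (M * cz 0%nat)).
  { apply Rmult_le_compat_l; [lra|]. apply rsum_mul_le_first; [exact Hn|lra| |].
    - intros a Ha. apply Rlt_le, Hu, Ha.
    - intros a Ha. apply HMb, margin_abs_le; auto; lra. }
  assert (HGam2 : (M * cz 0%nat / INR n) ^ 2 <= Gam ^ 2).
  { pose proof (Hu 0%nat Hn). fold (cz 0%nat) in *.
    assert (M * cz 0%nat < 0) by nra.
    assert (Hneg : M * cz 0%nat * / INR n < 0) by nra.
    unfold Rdiv. rewrite Rmult_comm in HGam. nra. }
  pose proof (netsum_cauchy_schwarz d L g (layer1_dir r u)) as Hcs.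
  rewrite Hinner, netsum_layer1_dir_sq in Hcs. fold N2 U2 Sg in Hcs.
  assert (Hcs' : N2 * Gam ^ 2 <= Sg * U2) by (apply (Rmult_le_reg_l N2); nra).
  assert ((delta / c) ^ 2 * (M * cz 0%nat / INR n) ^ 2 <= N2 * Gam ^ 2)
    by (apply Rmult_le_compat; auto using pow2_ge_0).
  unfold grad_lb. fold (cz 0%nat) U2 Sg. apply (Rmult_le_reg_r U2); [exact HU2|].
  replace (_ / U2 * U2) with ((delta / c) ^ 2 * (M * cz 0%nat / INR n) ^ 2) by (field; lra).
  lra.
Qed.

End LowerBound.

Lemma no_infinite_descent (r : nat -> R) c : 0 < c -> (forall t, 0 <= r t) ->
  (forall t, r (S t) <= r t - c) -> False.
Proof.
  intros Hc Hpos Hstep.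
  assert (Hdrop : forall t, r t <= r 0%nat - INR t * c).
  { induction t as [|t IH]; [simpl; lra|]. rewrite S_INR. specialize (Hstep t). lra. }
  destruct (INR_archimed c (r 0%nat) Hc) as [t Ht].
  specialize (Hdrop t). specialize (Hpos t). lra.
Qed.

Lemma descent_first_steps (r s : nat -> R) c r0 : 0 < c ->
  (forall t, 0 <= s t) -> 0 < s 0%nat -> r 0%nat <= r0 -> (forall t, r (S t) <= r t - c * s t) ->
  r 1%nat < r0 /\ forall t, r (S t) <= r 1%nat.
Proof.
  intros Hc Hs Hs0 Hr0 Hstep. split.
  - specialize (Hstep 0%nat). nra.
  - induction t as [|t IH]; [lra|]. specialize (Hstep (S t)). specialize (Hs (S t)). nra.
Qed.

Section LossShape.
Variables (loss dloss : R -> R).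
Hypothesis Hder : forall t, derivable_pt_lim loss t (dloss t).
Hypothesis Hneg : forall t, dloss t < 0.
Hypothesis Hpinf : forall eps, 0 < eps -> exists N, forall t, N < t -> Rabs (loss t) < eps.

Lemma loss_decreasing a b : a < b -> loss b < loss a.
Proof.
  intros Hab. destruct (MVT_cor2 loss dloss a b Hab (fun c _ => Hder c)) as [c [E _]].
  specialize (Hneg c). nra.
Qed.

Lemma loss_nonneg t : 0 <= loss t.
Proof. apply Rnot_lt_le. intros Hlt.
  destruct (Hpinf (- loss t) ltac:(lra)) as [N HN].
  set (T := Rmax N t + 1).
  assert (HNT : N < T) by (unfold T; pose proof (Rmax_l N t); lra).
  assert (HtT : t < T) by (unfold T; pose proof (Rmax_r N t); lra).
  specialize (HN T HNT). pose proof (loss_decreasing t T HtT). pose proof (Rle_abs (- loss T)).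
  rewrite Rabs_Ropp in *. lra.
Qed.

Lemma risk_nonneg n (d : nat -> nat) L x y V : (0 < n)%nat -> (1 <= L)%nat ->
  0 <= risk loss n d L x y V.
Proof.
  intros Hn HL. rewrite risk_margin by exact HL.
  apply Rmult_le_pos; [apply Rlt_le, Rinv_0_lt_compat, lt_0_INR; lia|].
  apply rsum_nonneg. intros. apply loss_nonneg.
Qed.

Lemma exists_pos_loss_gt r : r < loss 0 -> exists delta, 0 < delta /\ r < loss delta.
Proof.
  intros Hr.
  assert (Hcont : continuity_pt loss 0)
    by (apply derivable_continuous_pt; exists (dloss 0); apply Hder).
  destruct (Hcont (loss 0 - r) ltac:(lra)) as [alp [Halp Hnear]].
  exists (alp / 2). split; [lra|].
  assert (Hdist : R_dist (loss (alp / 2)) (loss 0) < loss 0 - r).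
  { apply Hnear. split; [split; [exact I|lra]|]. simpl. unfold R_dist.
    rewrite Rminus_0_r, Rabs_right; lra. }
  unfold R_dist in Hdist. pose proof (Rle_abs (loss 0 - loss (alp / 2))).
  rewrite Rabs_minus_sym in Hdist. lra.
Qed.

Lemma exists_margin_ge n (d : nat -> nat) L x y V delta : (0 < n)%nat -> (1 <= L)%nat ->
  risk loss n d L x y V < loss delta -> exists a, (a < n)%nat /\ delta <= margin d L x y V a.
Proof.
  intros Hn HL Hrisk. apply NNPP. intros Hnone.
  assert (Hall : forall a, (a < n)%nat -> loss delta < loss (margin d L x y V a)).
  { intros a Ha. apply loss_decreasing, Rnot_le_lt. intros Hle. apply Hnone. eauto. }
  pose proof (rsum_lt n _ _ Hn Hall) as Hsum.
  rewrite risk_margin in Hrisk by exact HL.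
  assert (HnR : 0 < INR n) by (apply lt_0_INR; lia).
  apply (Rmult_lt_compat_l (/ INR n)) in Hsum; [|apply Rinv_0_lt_compat; lra].
  replace (/ INR n * (INR n * loss delta)) with (loss delta) in Hsum by (field; lra). lra.
Qed.

Lemma exists_dloss_max_neg B : 0 <= B -> (forall t, continuity_pt dloss t) ->
  exists M, M < 0 /\ forall t, Rabs t <= B -> dloss t <= M.
Proof.
  intros HB Hcont.
  destruct (continuity_ab_maj dloss (- B) B ltac:(lra) (fun c _ => Hcont c)) as [Mx [HMx _]].
  exists (dloss Mx). split; [apply Hneg|]. intros t Ht. apply HMx.
  pose proof (Rle_abs t). pose proof (Rle_abs (- t)). rewrite Rabs_Ropp in *. lra.
Qed.

Lemma dloss_bound_pos G : (forall t, Rabs (dloss t) <= G) -> 0 < G.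
Proof.
  intros Hbd. specialize (Hbd 0). specialize (Hneg 0).
  pose proof (Rle_abs (- dloss 0)). rewrite Rabs_Ropp in *. lra.
Qed.

End LossShape.

Lemma zdat_vnorm_le (d : nat -> nat) n x y :
  (forall i, (i < n)%nat -> sqrt (rsum (d 0%nat) (fun j => (x i j) ^ 2)) <= 1) ->
  (forall i, (i < n)%nat -> y i = 1 \/ y i = -1) ->
  forall a, (a < n)%nat -> vnorm (d 0%nat) (zdat x y a) <= 1.
Proof.
  intros Hx Hy a Ha. unfold vnorm. rewrite (rsum_ext _ _ (fun j => x a j ^ 2)); auto.
  intros j _. unfold zdat. destruct (Hy a Ha) as [-> | ->]; ring.
Qed.

Lemma step_size_small L Rad beta G : (1 <= L)%nat -> 1 <= Rad -> 0 <= beta -> 0 < G ->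
  let eta := / (2 * (INR L) ^ 2 * Rad ^ (2 * L - 2) * (beta + G)) in
  0 < eta /\ eta * (G + beta) * (Rad ^ (L - 1)) ^ 2 * INR L <= 1 / 2.
Proof.
  intros HL HR Hb HG eta.
  assert (HP : 1 <= Rad ^ (L - 1)) by (apply pow_R1_Rle; lra).
  assert (HP2 : Rad ^ (2 * L - 2) = (Rad ^ (L - 1)) ^ 2) by (rewrite <- pow_mult; f_equal; lia).
  assert (HLr : 1 <= INR L) by (apply (le_INR 1); exact HL).
  unfold eta. rewrite HP2. split.
  - apply Rinv_0_lt_compat. repeat apply Rmult_lt_0_compat; nra.
  - replace (/ (2 * INR L ^ 2 * (Rad ^ (L - 1)) ^ 2 * (beta + G)) * (G + beta) *
      (Rad ^ (L - 1)) ^ 2 * INR L) with (/ (2 * INR L)) by (field; repeat split; nra).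
    apply (Rmult_le_reg_l (2 * INR L)); [lra|]. rewrite Rinv_r; lra.
Qed.

Theorem mainTheorem9
  (n : nat) (d : nat -> nat) (L : nat)
  (x : nat -> nat -> R) (y : nat -> R)
  (loss dloss : R -> R) (beta G Rad : R)
  (W : nat -> net) (g : nat -> net)
  (* data *)
  (Hn : (0 < n)%nat) (HL : (1 <= L)%nat) (HdL : d L = 1%nat)
  (Hx : forall i, (i < n)%nat ->
          sqrt (rsum (d 0%nat) (fun j => (x i j) ^ 2)) <= 1)
  (Hy : forall i, (i < n)%nat -> y i = 1 \/ y i = -1)
  (Hsep : exists u : nat -> R, forall i, (i < n)%nat ->
          0 < rsum (d 0%nat) (fun j => u j * zdat x y i j))
  (* Assumption 1 *)
  (Hder : forall t, derivable_pt_lim loss t (dloss t))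
  (Hcont : forall t, continuity_pt dloss t)
  (Hneg : forall t, dloss t < 0)
  (Hminf : forall M, exists N, forall t, t < N -> M < loss t)
  (Hpinf : forall eps, 0 < eps -> exists N, forall t, N < t -> Rabs (loss t) < eps)
  (* Assumption 4 *)
  (Hlip : forall s t, Rabs (dloss s - dloss t) <= beta * Rabs (s - t))
  (Hbd : forall t, Rabs (dloss t) <= G)
  (* gradient descent with step 1/beta(R), beta(R) = 2 L^2 R^(2L-2) (beta+G) *)
  (HR : 1 <= Rad)
  (Hgrad : forall t, is_grad loss n d L x y (W t) (g t))
  (Hstep : forall t k i j,
     W (S t) k i j =
       W t k i j - / (2 * (INR L) ^ 2 * Rad ^ (2 * L - 2) * (beta + G)) * g t k i j)
  (* Assumption 2 *)
  (Hg0 : exists k i j, (1 <= k <= L)%nat /\ (i < d k)%nat /\ (j < d (k - 1))%nat /\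
          g 0%nat k i j <> 0)
  (Hr0 : risk loss n d L x y (W 0%nat) <= loss 0) :
  exists t k, (1 <= k <= L)%nat /\ Rad < frob d (W t) k.
Proof.
  apply NNPP. intros Hout.
  assert (Hball : forall t, in_ball d L Rad (W t)).
  { intros t k Hk. apply Rnot_lt_le. intros Hlt. apply Hout. eauto. }
  assert (Hz := zdat_vnorm_le d n x y Hx Hy).
  destruct (step_size_small L Rad beta G HL HR (lipschitz_const_ge0 dloss beta Hlip)
    (dloss_bound_pos dloss Hneg G Hbd)) as [Heta Hsmall].
  set (eta := / (2 * (INR L) ^ 2 * Rad ^ (2 * L - 2) * (beta + G))) in *.
  set (Sg := fun t => netsum d L (fun k i j => g t k i j ^ 2)).
  set (r := fun t => risk loss n d L x y (W t)).
  assert (Hdesc : forall t, r (S t) <= r t - eta / 2 * Sg t)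
    by (intros t; eapply descent; eauto).
  destruct (descent_first_steps r Sg (eta / 2) (loss 0)) as [Hr1 Hr1_ge];
    [lra|intros; apply netsum_nonneg; intros; apply pow2_ge_0|now apply netsum_sq_pos|
     exact Hr0|exact Hdesc|].
  destruct (exists_pos_loss_gt loss dloss Hder (r 1%nat) Hr1) as [delta [Hdelta Hloss]].
  destruct (exists_dloss_max_neg dloss Hneg (Rad ^ L)) as [M [HM HMb]];
    [apply pow_le; lra|assumption|].
  destruct Hsep as [u Hu].
  assert (Hlow : forall t, grad_lb d x y n Rad delta M u <= Sg (S t)).
  { intros t. apply (grad_sq_ge d L x y HL HdL loss dloss n Hder (W (S t)) (g (S t))); auto.
    apply (exists_margin_ge loss dloss Hder Hneg); auto.
    specialize (Hr1_ge t). unfold r in *. lra. }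
  pose proof (grad_lb_pos d x y n Rad delta M u Hn ltac:(lra) Hdelta HM (Hu 0%nat Hn)).
  apply (no_infinite_descent (fun t => r (S t)) (eta / 2 * grad_lb d x y n Rad delta M u));
    [nra| |].
  - intros t. now apply (risk_nonneg loss dloss Hder Hneg Hpinf).
  - intros t. specialize (Hdesc (S t)). specialize (Hlow t). nra.
Qed.
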